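(* If $G$ and $H$ are 1-homogeneous graphs, then \[\chi_{vec}(G \times H) = \min\{\chi_{vec}(G), \chi_{vec}(H)\}.\]
   Context: Graphs are finite, simple and undirected. A graph $G$ is 1-homogeneous if (1) for every $k$, the number of closed walks of length $k$ starting at a vertex $u$ does not depend on $u$, and (2) for every $k$, the number of walks of length $k$ from $u$ to $v$, for adjacent $u,v$, does not depend on the edge $uv$. The categorical product $G\times H$ has vertex set $V(G)\times V(H)$, with $(u_1,v_1)\sim(u_2,v_2)$ iff $u_1\sim u_2$ and $v_1\sim v_2$. For a real $k>1$, a vector $k$-coloring of $G$ is a map $\varphi$ from $V(G)$ to the unit sphere of some $\mathbb{R}^d$ with $\varphi(u)^T\varphi(v)\le -\frac{1}{k-1}$ whenever $u\sim v$; the vector chromatic number $\chi_{vec}(G)$ is the smallest such $k$ (equal to $1$ for graphs with no edges). *)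

From HB Require Import structures.
From mathcomp Require Import all_boot all_order all_algebra.
From mathcomp Require Import all_classical all_reals.
Set Implicit Arguments. Unset Strict Implicit. Unset Printing Implicit Defensive.
Import Order.TTheory GRing.Theory Num.Theory.

Definition simple_graph (V : finType) (e : rel V) : Prop :=
  symmetric e /\ irreflexive e.

Fixpoint nwalks (V : finType) (e : rel V) (k : nat) (u v : V) : nat :=
  match k with
  | 0 => (u == v) : nat
  | k'.+1 => \sum_(w | e u w) nwalks e k' w v
  end.

Definition one_homogeneous (V : finType) (e : rel V) : Prop :=
  (forall (k : nat) (u u' : V), nwalks e k u u = nwalks e k u' u') /\
  (forall (k : nat) (u v u' v' : V), e u v -> e u' v' ->
      nwalks e k u v = nwalks e k u' v').

Definition cat_prod (V W : finType) (e : rel V) (f : rel W) : rel (V * W) :=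
  fun x y => e x.1 y.1 && f x.2 y.2.

Local Open Scope ring_scope.

Definition dotv (R : realType) (d : nat) (x y : 'rV[R]_d) : R := (x *m y^T) 0 0.

Definition vector_colorable (R : realType) (V : finType) (e : rel V) (k : R) : Prop :=
  exists (d : nat) (phi : V -> 'rV[R]_d),
    (forall u, dotv (phi u) (phi u) = 1) /\
    (forall u v, e u v -> dotv (phi u) (phi v) <= - (k - 1)^-1).

Definition has_edge (V : finType) (e : rel V) : Prop := exists u v, e u v.

Definition chi_vec (R : realType) (V : finType) (e : rel V) : R :=
  if `[< has_edge e >] then
    inf [set k : R | 1 < k /\ vector_colorable e k]%classic
  else 1.

(* A one-homogeneous graph G with an edge is D-regular, and if -mu is the least
   eigenvalue of its adjacency matrix A then chi_vec(G) = 1 + D/mu.  Summing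
   <phi u, phi v> over the edges of a vector k-coloring phi gives the lower
   bound, since every coordinate of phi obeys the Rayleigh bound
   x^T A x >= -mu |x|^2.  Conversely, the eigenspace of -mu contains a nonzero
   symmetric polynomial N in A; the entries of N^2 count walks, so by
   one-homogeneity they are constant on the diagonal and on the edges, and
   the rows of N, normalized, form a vector coloring attaining the bound.
   The product G x H is D_G D_H-regular, and A_G (x) A_H + max(D_G mu_H, D_H mu_G) I
   is a nonnegative combination of Kronecker products of the psd matrices
   A_G + mu_G I, D_G I - A_G and A_H + mu_H I, D_H I - A_H.  By Schur's
   product theorem it is psd, so the same argument bounds chi_vec(G x H) below
   by min(chi_vec G, chi_vec H); colorings of either factor lift to G x H. *)

From HB Require Import structures.
From mathcomp Require Import all_boot all_order all_algebra.
From mathcomp Require Import all_classical all_reals.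
From mathcomp Require Import ring lra.
Set Implicit Arguments. Unset Strict Implicit. Unset Printing Implicit Defensive.
Import Order.TTheory GRing.Theory Num.Theory.
Local Open Scope ring_scope.

Section QuadraticForms.
Variables (R : realFieldType) (T : finType).
Implicit Types (P Q Y : T -> T -> R) (x y : T -> R).

Definition bform P x y := \sum_u \sum_v P u v * x u * y v.
Definition qform P x := bform P x x.
Definition psd P := forall x, 0 <= qform P x.
Definition symm P := forall u v, P u v = P v u.
Definition kdelta (u v : T) : R := (u == v)%:R.
Definition norm2 x := \sum_u x u ^+ 2.
Definition rayleigh_lb P t := forall x, t * norm2 x <= qform P x.

Lemma eq_qform P Q x : (forall u v, P u v = Q u v) -> qform P x = qform Q x.
Proof.
by move=> PQ; apply: eq_bigr => u _; apply: eq_bigr => v _; rewrite PQ.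
Qed.

Lemma qformD P Q x :
  qform (fun u v => P u v + Q u v) x = qform P x + qform Q x.
Proof.
rewrite /qform /bform -big_split; apply: eq_bigr => u _.
by rewrite -big_split; apply: eq_bigr => v _ /=; ring.
Qed.

Lemma qformZ (a : R) P x : qform (fun u v => a * P u v) x = a * qform P x.
Proof.
rewrite /qform /bform mulr_sumr; apply: eq_bigr => u _.
by rewrite mulr_sumr; apply: eq_bigr => v _; ring.
Qed.

Lemma qformN P x : qform (fun u v => - P u v) x = - qform P x.
Proof. by rewrite -mulN1r -qformZ; apply: eq_qform => u v; rewrite mulN1r. Qed.

Lemma psdD P Q : psd P -> psd Q -> psd (fun u v => P u v + Q u v).
Proof. by move=> pP pQ x; rewrite qformD addr_ge0. Qed.

Lemma psdZ (a : R) P : 0 <= a -> psd P -> psd (fun u v => a * P u v).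
Proof. by move=> a0 pP x; rewrite qformZ mulr_ge0. Qed.

Lemma bformC P x y : symm P -> bform P x y = bform P y x.
Proof.
move=> sP; rewrite /bform exchange_big; apply: eq_bigr => u _.
by apply: eq_bigr => v _; rewrite sP; ring.
Qed.

Lemma qform_shift P x y t :
  qform P (fun u => x u + t * y u) =
  qform P x + t * (bform P x y + bform P y x) + t ^+ 2 * qform P y.
Proof.
rewrite /qform /bform mulrDr !mulr_sumr -!big_split /=.
apply: eq_bigr => u _; rewrite !mulr_sumr -!big_split /=.
by apply: eq_bigr => v _; ring.
Qed.

Lemma quadratic_ge0_discr (a b c : R) : 0 <= a ->
  (forall t, 0 <= a * t ^+ 2 + 2 * b * t + c) -> b ^+ 2 <= a * c.
Proof.
move=> a0; case: (eqVneq a 0) => [->|a_neq0] quad_ge0.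
  have [->|b_neq0] := eqVneq b 0; first by rewrite expr0n mul0r.
  have := quad_ge0 (- (c + 1) / (2 * b)).
  have -> : 0 * (- (c + 1) / (2 * b)) ^+ 2 + 2 * b * (- (c + 1) / (2 * b)) + c = -1.
    by field.
  lra.
have := quad_ge0 (- b / a).
have -> : a * (- b / a) ^+ 2 + 2 * b * (- b / a) + c = (a * c - b ^+ 2) / a.
  by field.
by rewrite pmulr_lge0 ?invr_gt0 ?lt_def ?a_neq0 // subr_ge0.
Qed.

Lemma bform_CauchySchwarz P x y : symm P -> psd P ->
  bform P x y ^+ 2 <= qform P x * qform P y.
Proof.
move=> sP pP; rewrite mulrC; apply: quadratic_ge0_discr (pP y) _ => t.
have := pP (fun u => x u + t * y u); rewrite qform_shift (bformC _ _ sP).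
by congr (0 <= _); ring.
Qed.

Lemma sum_mul_kdelta i (F : T -> R) : \sum_u F u * kdelta i u = F i.
Proof.
rewrite (bigD1 i) //= big1 ?addr0 /kdelta ?eqxx ?mulr1 // => u /negbTE.
by rewrite eq_sym => ->; rewrite mulr0.
Qed.

Lemma bform_kdeltal P i x : bform P (kdelta i) x = \sum_v P i v * x v.
Proof.
rewrite -(sum_mul_kdelta i (fun u => \sum_v P u v * x v)).
by apply: eq_bigr => u _; rewrite mulr_suml; apply: eq_bigr => v _; ring.
Qed.

Lemma bform_kdelta P i j : bform P (kdelta i) (kdelta j) = P i j.
Proof. by rewrite bform_kdeltal sum_mul_kdelta. Qed.

Lemma qform_kdelta P i : qform P (kdelta i) = P i i.
Proof. exact: bform_kdelta. Qed.

Lemma bform_id x y : bform kdelta x y = \sum_u x u * y u.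
Proof.
apply: eq_bigr => u _; rewrite -(sum_mul_kdelta u (fun v => x u * y v)).
by apply: eq_bigr => v _; ring.
Qed.

Lemma qform_id x : qform kdelta x = norm2 x.
Proof. by rewrite /qform bform_id; apply: eq_bigr => u _; rewrite expr2. Qed.

Lemma symm_kdelta : symm kdelta.
Proof. by move=> u v; rewrite /kdelta eq_sym. Qed.

Lemma norm2_ge0 x : 0 <= norm2 x.
Proof. by apply: sumr_ge0 => u _; exact: sqr_ge0. Qed.

Lemma psd_kdelta : psd kdelta.
Proof. by move=> x; rewrite qform_id norm2_ge0. Qed.

Lemma psd_diag_ge0 P i : psd P -> 0 <= P i i.
Proof. by move=> pP; rewrite -qform_kdelta. Qed.

Lemma psd_diag_eq0 P i j : symm P -> psd P -> P i i = 0 -> P i j = 0.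
Proof.
move=> sP pP Pii; have := bform_CauchySchwarz (kdelta i) (kdelta j) sP pP.
rewrite bform_kdelta !qform_kdelta Pii mul0r => Pij2.
by apply/eqP; rewrite -sqrf_eq0 eq_le Pij2 sqr_ge0.
Qed.

Section SchurComplement.
Variables (P : T -> T -> R) (i : T).
Hypotheses (sP : symm P) (pP : psd P) (Pii_gt0 : 0 < P i i).

Definition schur_compl u v := P u v - P i u * P i v / P i i.

Lemma symm_schur_compl : symm schur_compl.
Proof. by move=> u v; rewrite /schur_compl sP; ring. Qed.

Lemma qform_schur_compl x :
  qform schur_compl x = qform P x - (\sum_v P i v * x v) ^+ 2 / P i i.
Proof.
have -> : (\sum_v P i v * x v) ^+ 2 / P i i =
    \sum_u \sum_v P i u * P i v / P i i * x u * x v.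
  rewrite expr2 !mulr_suml; apply: eq_bigr => u _.
  by rewrite mulr_sumr mulr_suml; apply: eq_bigr => v _; ring.
rewrite /qform /bform -sumrB; apply: eq_bigr => u _.
by rewrite -sumrB; apply: eq_bigr => v _; rewrite /schur_compl; ring.
Qed.

(* [qform schur_compl x] is [qform P] at [x - s e_i] for the minimizing [s]. *)
Lemma psd_schur_compl : psd schur_compl.
Proof.
move=> x; pose s := (\sum_v P i v * x v) / P i i.
have := pP (fun u => x u + (- s) * kdelta i u).
rewrite qform_shift qform_kdelta (bformC _ _ sP) bform_kdeltal.
rewrite qform_schur_compl /s; congr (0 <= _).
by field; rewrite gt_eqF.
Qed.

Lemma schur_compl_row0 v : schur_compl i v = 0.
Proof. by rewrite /schur_compl; field; rewrite gt_eqF. Qed.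

End SchurComplement.

(* Fejer's theorem, by induction on the support of [P]: replacing [P] by a
   Schur complement removes a row at the cost [qform Y (P i) / P i i >= 0]. *)
Lemma psd_frobenius_ge0_on (S : {set T}) P Y :
  symm P -> psd P -> psd Y -> (forall u v, u \notin S -> P u v = 0) ->
  0 <= \sum_u \sum_v P u v * Y u v.
Proof.
move=> + + pY; have [n] := ubnP #|S|; elim: n S P => // n IH S P ltSn sP pP P_supp.
have [S0|[i iS]] := set_0Vmem S.
  rewrite big1 // => u _; rewrite big1 // => v _.
  by rewrite P_supp ?mul0r // S0 inE.
have ltSi : (#|S :\ i| < n)%N by rewrite (cardsD1 i S) iS in ltSn.
have [Pii0|Pii_neq0] := eqVneq (P i i) 0.
  apply: (IH _ P ltSi sP pP) => u v; rewrite !inE negb_and negbK.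
  by case/orP=> [/eqP->|]; [exact: psd_diag_eq0 | exact: P_supp].
have Pii_gt0 : 0 < P i i by rewrite lt_def Pii_neq0 psd_diag_ge0.
have -> : \sum_u \sum_v P u v * Y u v =
    \sum_u \sum_v schur_compl P i u v * Y u v + qform Y (P i) / P i i.
  rewrite /qform /bform mulr_suml -big_split; apply: eq_bigr => u _ /=.
  rewrite mulr_suml -big_split; apply: eq_bigr => v _ /=.
  by rewrite /schur_compl; field; rewrite gt_eqF.
apply: addr_ge0; last exact: divr_ge0 (pY _) (ltW Pii_gt0).
apply: (IH _ _ ltSi (symm_schur_compl i sP) (psd_schur_compl sP pP Pii_gt0)).
move=> u v; rewrite !inE negb_and negbK => /orP[/eqP->|uS].
  exact: schur_compl_row0 Pii_gt0 _.
by rewrite /schur_compl P_supp // -sP P_supp //; ring.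
Qed.

Lemma psd_frobenius_ge0 P Y : symm P -> psd P -> psd Y ->
  0 <= \sum_u \sum_v P u v * Y u v.
Proof.
move=> sP pP pY; apply: (psd_frobenius_ge0_on (S := [set: T])) => // u v.
by rewrite inE.
Qed.

End QuadraticForms.

Arguments kdelta {R T} u v.

Section KroneckerForms.
Variables (R : realFieldType) (V W : finType).
Implicit Types (P : V -> V -> R) (Q : W -> W -> R) (z : V * W -> R).

Definition kron_form P Q (x y : V * W) : R := P x.1 y.1 * Q x.2 y.2.

Lemma sum_pair (F : V * W -> R) : \sum_x F x = \sum_a \sum_b F (a, b).
Proof. by rewrite pair_bigA; apply: eq_bigr => -[a b]. Qed.

Lemma kron_kdelta (x y : V * W) : kron_form kdelta kdelta x y = kdelta x y.
Proof.
case: x y => [a b] [a' b']; rewrite /kron_form /kdelta xpair_eqE /=.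
by case: (a == a'); case: (b == b'); rewrite ?mulr1 ?mulr0.
Qed.

Lemma qform_kron P Q z : qform (kron_form P Q) z =
  \sum_a \sum_a' P a a' * bform Q (fun b => z (a, b)) (fun b => z (a', b)).
Proof.
rewrite /qform /bform sum_pair; apply: eq_bigr => a _.
under eq_bigr do rewrite sum_pair.
rewrite exchange_big; apply: eq_bigr => a' _.
rewrite mulr_sumr; apply: eq_bigr => b _.
by rewrite mulr_sumr; apply: eq_bigr => b' _; rewrite /kron_form /=; ring.
Qed.

Lemma psd_slice_bform Q z :
  psd Q -> psd (fun a a' => bform Q (fun b => z (a, b)) (fun b => z (a', b))).
Proof.
move=> pQ x; have := pQ (fun b => \sum_a x a * z (a, b)); congr (0 <= _).
rewrite /qform /bform.
transitivity (\sum_b \sum_b' \sum_a \sum_a'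
                 Q b b' * (x a * z (a, b)) * (x a' * z (a', b'))).
  apply: eq_bigr => b _; apply: eq_bigr => b' _.
  rewrite -mulrA mulr_suml mulr_sumr; apply: eq_bigr => a _.
  by rewrite !mulr_sumr; apply: eq_bigr => a' _; ring.
under eq_bigr do rewrite exchange_big.
rewrite exchange_big; apply: eq_bigr => a _.
under eq_bigr do rewrite exchange_big.
rewrite exchange_big; apply: eq_bigr => a' _.
rewrite !mulr_suml; apply: eq_bigr => b _.
by rewrite !mulr_suml; apply: eq_bigr => b' _; ring.
Qed.

(* Schur's product theorem, via Fejer's theorem on the slices of z. *)
Lemma psd_kron P Q : symm P -> psd P -> psd Q -> psd (kron_form P Q).
Proof.
move=> sP pP pQ z; rewrite qform_kron.
exact: psd_frobenius_ge0 sP pP (psd_slice_bform z pQ).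
Qed.

End KroneckerForms.

Section AdjacencyForm.
Variables (R : realFieldType) (T : finType) (r : rel T).
Hypothesis r_sym : symmetric r.
Implicit Types (x : T -> R) (D : R).

Definition adj (u v : T) : R := (r u v)%:R.
Definition regular D := forall u, \sum_v adj u v = D.

Lemma symm_adj : symm adj.
Proof. by move=> u v; rewrite /adj r_sym. Qed.

Lemma adj_ge0 u v : 0 <= adj u v.
Proof. exact: ler0n. Qed.

Lemma sum_adj_sqr D x : regular D ->
  \sum_u \sum_v adj u v * x u ^+ 2 = D * norm2 x /\
  \sum_u \sum_v adj u v * x v ^+ 2 = D * norm2 x.
Proof.
move=> regD; have sum_l : \sum_u \sum_v adj u v * x u ^+ 2 = D * norm2 x.
  by rewrite /norm2 mulr_sumr; apply: eq_bigr => u _; rewrite -mulr_suml regD.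
split=> //; rewrite exchange_big -sum_l; apply: eq_bigr => u _.
by apply: eq_bigr => v _; rewrite symm_adj.
Qed.

(* Expand the nonnegative edge sums of (x u - x v)^2 and (x u + x v)^2. *)
Lemma qform_adj_le D x : regular D -> qform adj x <= D * norm2 x.
Proof.
move=> regD; have [sum_l sum_r] := sum_adj_sqr x regD.
have : 0 <= \sum_u \sum_v adj u v * (x u - x v) ^+ 2.
  by do 2![apply: sumr_ge0 => ? _]; rewrite mulr_ge0 ?adj_ge0 ?sqr_ge0.
have -> : \sum_u \sum_v adj u v * (x u - x v) ^+ 2 =
   \sum_u \sum_v adj u v * x u ^+ 2 + \sum_u \sum_v adj u v * x v ^+ 2
   - 2 * qform adj x.
  rewrite /qform /bform -big_split mulr_sumr -sumrB; apply: eq_bigr => u _.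
  by rewrite -big_split mulr_sumr -sumrB; apply: eq_bigr => v _ /=; ring.
rewrite sum_l sum_r; lra.
Qed.

Lemma qform_adj_ge D x : regular D -> - D * norm2 x <= qform adj x.
Proof.
move=> regD; have [sum_l sum_r] := sum_adj_sqr x regD.
have : 0 <= \sum_u \sum_v adj u v * (x u + x v) ^+ 2.
  by do 2![apply: sumr_ge0 => ? _]; rewrite mulr_ge0 ?adj_ge0 ?sqr_ge0.
have -> : \sum_u \sum_v adj u v * (x u + x v) ^+ 2 =
   \sum_u \sum_v adj u v * x u ^+ 2 + \sum_u \sum_v adj u v * x v ^+ 2
   + 2 * qform adj x.
  rewrite /qform /bform mulr_sumr -!big_split; apply: eq_bigr => u _ /=.
  by rewrite mulr_sumr -!big_split; apply: eq_bigr => v _ /=; ring.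
rewrite sum_l sum_r; lra.
Qed.

Lemma psd_adj_shift mu : rayleigh_lb adj (- mu) ->
  psd (fun u v => adj u v + mu * kdelta u v).
Proof. by move=> lb x; have := lb x; rewrite qformD qformZ qform_id mulNr; lra. Qed.

Lemma psd_deg_sub_adj D : regular D -> psd (fun u v => D * kdelta u v - adj u v).
Proof.
by move=> regD x; rewrite qformD qformZ qform_id qformN subr_ge0 qform_adj_le.
Qed.

End AdjacencyForm.

Arguments adj {R T} r u v.

Section ColoringBound.
Variables (R : realType) (T : finType).

Lemma dotvE d (a b : 'rV[R]_d) : dotv a b = \sum_j a 0 j * b 0 j.
Proof. by rewrite /dotv mxE; apply: eq_bigr => j _; rewrite mxE. Qed.

Lemma sum_dotv_qform d (P : T -> T -> R) (phi : T -> 'rV[R]_d) :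
  \sum_u \sum_v P u v * dotv (phi u) (phi v) = \sum_j qform P (fun u => phi u 0 j).
Proof.
symmetry; rewrite exchange_big; apply: eq_bigr => u _.
rewrite exchange_big; apply: eq_bigr => v _.
by rewrite dotvE mulr_sumr; apply: eq_bigr => j _; ring.
Qed.

Lemma sum_norm2_cols d (phi : T -> 'rV[R]_d) :
  \sum_j norm2 (fun u => phi u 0 j) = \sum_u dotv (phi u) (phi u).
Proof.
under eq_bigr do rewrite -qform_id; rewrite -sum_dotv_qform.
apply: eq_bigr => u _; rewrite -(sum_mul_kdelta u (fun v => dotv (phi u) (phi v))).
by apply: eq_bigr => v _; rewrite mulrC.
Qed.

(* Sum <phi u, phi v> over the ordered edges: the Rayleigh bound of each
   coordinate gives [- c #|T|], the coloring condition [- D #|T| / (k - 1)]. *)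
Lemma vector_colorable_ge (r : rel T) (c k D : R) :
  (0 < #|T|)%N -> 0 < D -> regular r D ->
  rayleigh_lb (adj r) (- c) -> 1 < k -> vector_colorable r k -> 1 + D / c <= k.
Proof.
move=> T_gt0 D_gt0 regD rayleigh k_gt1 [d [phi [phi_unit phi_edge]]].
set S := \sum_u \sum_v adj r u v * dotv (phi u) (phi v).
pose n : R := #|T|%:R.
have n_gt0 : 0 < n by rewrite ltr0n.
have S_ge : - c * n <= S.
  have -> : n = \sum_j norm2 (fun u => phi u 0 j).
    by rewrite sum_norm2_cols (eq_bigr _ (fun u _ => phi_unit u)) sumr_const.
  by rewrite /S sum_dotv_qform mulr_sumr; apply: ler_sum => j _; exact: rayleigh.
set iv := (k - 1)^-1.
have S_le : S <= - iv * (n * D).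
  have -> : - iv * (n * D) = \sum_u \sum_v adj r u v * (- iv).
    rewrite /n -sumr_const mulr_suml mulr_sumr; apply: eq_bigr => u _.
    by rewrite -mulr_suml regD; ring.
  apply: ler_sum => u _; apply: ler_sum => v _; rewrite /adj.
  by case: (boolP (r u v)) => ruv; rewrite ?mul0r // !mul1r phi_edge.
have iv_gt0 : 0 < iv by rewrite invr_gt0 subr_gt0.
have ivK : (k - 1) * iv = 1 by rewrite mulfV // gt_eqF // subr_gt0.
have ivD_le : iv * D <= c by rewrite -(ler_pM2r n_gt0); nra.
have c_gt0 : 0 < c by apply: lt_le_trans ivD_le; rewrite mulr_gt0.
rewrite -lerBrDl ler_pdivrMr //; nra.
Qed.

End ColoringBound.

Section SymmetricMatrices.
Variables (R : realFieldType) (n : nat).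
Local Notation M := 'M[R]_n.+1.
Implicit Types (A B S X : M) (x : 'I_n.+1 -> R).

Lemma symm_mx A : A^T = A -> symm A.
Proof. by move=> sA i j; rewrite -[in LHS]sA mxE. Qed.

Lemma sym_mulmx2_eq0 S X : S^T = S -> S *m (S *m X) = 0 -> S *m X = 0.
Proof.
move=> sS SSX0; set Z := S *m X.
have ZtZ0 : Z^T *m Z = 0 by rewrite trmx_mul sS -mulmxA SSX0 mulmx0.
apply/matrixP => i j; rewrite [RHS]mxE.
have : (Z^T *m Z) j j = 0 by rewrite ZtZ0 mxE.
rewrite mxE => /eqP; rewrite psumr_eq0 => [/allP/(_ i (mem_index_enum i))|k _].
  by rewrite mxE -expr2 sqrf_eq0 => /eqP.
by rewrite mxE -expr2 sqr_ge0.
Qed.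

Lemma sym_mulmx_expr_eq0 S X m : S^T = S -> S ^+ m *m X = 0 -> S *m X = 0.
Proof.
move=> sS; elim: m X => [|m IH] X.
  by rewrite expr0 mul1mx => ->; rewrite mulmx0.
by rewrite exprSr mulmxE -mulrA -mulmxE => /IH; apply: sym_mulmx2_eq0.
Qed.

Lemma horner_mx_eigen A (v : 'rV[R]_n.+1) lam (p : {poly R}) :
  v *m A = lam *: v -> v *m horner_mx A p = p.[lam] *: v.
Proof.
move=> vA; elim/poly_ind: p => [|p c IH].
  by rewrite rmorph0 mulmx0 horner0 scale0r.
rewrite rmorphD rmorphM /= horner_mx_X horner_mx_C !hornerE.
rewrite mulmxDr -mulmxE mulmxA IH -scalemxAl vA scalerA mul_mx_scalar.
by rewrite scalerDl.
Qed.

Lemma trmx_horner_mx A (p : {poly R}) : A^T = A -> (horner_mx A p)^T = horner_mx A p.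
Proof.
move=> sA; elim/poly_ind: p => [|p c IH]; first by rewrite rmorph0 trmx0.
rewrite rmorphD rmorphM /= horner_mx_X horner_mx_C raddfD /= tr_scalar_mx.
rewrite -mulmxE trmx_mul IH sA mulmxE.
by have := comm_horner_mx2 A 'X p; rewrite horner_mx_X => ->.
Qed.

(* If [lam] is an eigenvalue of the symmetric [A], write the characteristic
   polynomial as [('X - lam)^m q] with [q.[lam] != 0]; then [q(A)] is a nonzero
   matrix killed by [(A - lam)^m], hence by [A - lam]. *)
Lemma sym_eigen_horner_mx A lam : A^T = A -> \det (A - lam%:M) = 0 ->
  exists p : {poly R},
    horner_mx A p != 0 /\ A *m horner_mx A p = lam *: horner_mx A p.
Proof.
move=> sA /eqP/det0P[v v_neq0]; rewrite mulmxBr mul_mx_scalar => /eqP.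
rewrite subr_eq0 => /eqP vA.
have [m [q q_lam cpE]] := multiplicity_XsubC (char_poly A) lam.
rewrite monic_neq0 ?char_poly_monic //= in q_lam.
set S := horner_mx A ('X - lam%:P).
have SE : S = A - lam%:M by rewrite /S rmorphB /= horner_mx_X horner_mx_C.
have SmN : S ^+ m *m horner_mx A q = 0.
  have SmE : S ^+ m = horner_mx A (('X - lam%:P) ^+ m) by rewrite rmorphXn.
  have := Cayley_Hamilton A; rewrite cpE rmorphM /= -SmE => CH.
  by rewrite SmE mulmxE comm_horner_mx2 -SmE.
exists q; split.
  apply: contra q_lam => /eqP qA0; have := horner_mx_eigen q vA.
  rewrite qA0 mulmx0 => /esym/eqP; rewrite scaler_eq0 (negbTE v_neq0) orbF.
  by rewrite rootE.
have S_sym : S^T = S by rewrite SE raddfB /= tr_scalar_mx sA.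
have := sym_mulmx_expr_eq0 S_sym SmN; rewrite SE mulmxBl mul_scalar_mx.
by move=> /eqP; rewrite subr_eq0 => /eqP.
Qed.

Definition mxmulf A x i := \sum_j A i j * x j.

Lemma norm2_mxmulf_le A x : A^T = A -> psd A ->
  norm2 (mxmulf A x) <= \tr A * qform A x.
Proof.
move=> sA pA; rewrite /norm2 mulr_suml; apply: ler_sum => i _.
have := bform_CauchySchwarz (kdelta i) x (symm_mx sA) pA.
by rewrite bform_kdeltal qform_kdelta.
Qed.

Lemma norm2_le_mxmulf A x : A \in unitmx ->
  norm2 x <= (\sum_i \sum_j invmx A i j ^+ 2) * norm2 (mxmulf A x).
Proof.
move=> A_unit; rewrite /norm2 mulr_suml; apply: ler_sum => i _.
have -> : x i = \sum_j invmx A i j * mxmulf A x j.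
  transitivity (\sum_l (invmx A *m A) i l * x l).
    rewrite mulVmx // -(sum_mul_kdelta i x); apply: eq_bigr => l _.
    by rewrite mxE mulrC.
  under eq_bigr do rewrite mxE mulr_suml.
  rewrite exchange_big; apply: eq_bigr => j _; rewrite mulr_sumr.
  by apply: eq_bigr => l _; rewrite mulrA.
have := bform_CauchySchwarz (invmx A i) (mxmulf A x)
  (@symm_kdelta _ _) (@psd_kdelta _ _).
by rewrite bform_id !qform_id.
Qed.

Lemma psd_unitmx_coercive A : A^T = A -> psd A -> A \in unitmx ->
  exists2 eps, 0 < eps & forall x, eps * norm2 x <= qform A x.
Proof.
move=> sA pA A_unit; set K := \sum_i \sum_j invmx A i j ^+ 2.
have K_ge0 : 0 <= K by do 2![apply: sumr_ge0 => ? _]; exact: sqr_ge0.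
have tr_ge0 : 0 <= \tr A by apply: sumr_ge0 => i _; exact: psd_diag_ge0.
exists (K * \tr A + 1)^-1; first by rewrite invr_gt0; nra.
move=> x; rewrite ler_pdivrMl; last by nra.
have := norm2_mxmulf_le x sA pA; have := norm2_le_mxmulf x A_unit.
have := pA x; rewrite -/K; nra.
Qed.

End SymmetricMatrices.

Section LeastEigenvalue.
Variables (R : realType) (n : nat) (A : 'M[R]_n.+1).
Hypothesis sA : A^T = A.

Lemma qform_sub_scalar lam x :
  qform (A - lam%:M) x = qform A x - lam * norm2 x.
Proof.
rewrite -qform_id /qform /bform mulr_sumr -sumrB; apply: eq_bigr => i _.
rewrite mulr_sumr -sumrB; apply: eq_bigr => j _.
by rewrite !mxE /kdelta -mulr_natr; ring.
Qed.

Lemma rayleigh_lb_le_diag t i : rayleigh_lb A t -> t <= A i i.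
Proof.
move=> /(_ (kdelta i)); rewrite qform_kdelta -qform_id qform_kdelta.
by rewrite /kdelta eqxx mulr1.
Qed.

Lemma has_sup_rayleigh_lb t0 : rayleigh_lb A t0 ->
  has_sup [set t | rayleigh_lb A t]%classic.
Proof.
by split; [exists t0 | exists (A 0 0) => t; exact: rayleigh_lb_le_diag].
Qed.

Let lam := sup [set t | rayleigh_lb A t]%classic.

Lemma rayleigh_lb_sup t0 : rayleigh_lb A t0 -> rayleigh_lb A lam.
Proof.
move=> lb_t0 x; have lb_sup := has_sup_rayleigh_lb lb_t0.
have [x0|x_neq0] := eqVneq (norm2 x) 0.
  by have := lb_t0 x; rewrite x0 !mulr0.
have x_gt0 : 0 < norm2 x by rewrite lt_def x_neq0 norm2_ge0.
rewrite -ler_pdivlMr //; apply/ler_addgt0Pr => eps eps_gt0.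
have [t lb_t lt_t] := sup_adherent eps_gt0 lb_sup.
by rewrite -lerBlDr (le_trans (ltW lt_t)) // ler_pdivlMr //; exact: lb_t.
Qed.

(* If [A - lam] were invertible, it would be coercive and [lam] would not be
   the largest Rayleigh lower bound. *)
Lemma rayleigh_sup_det t0 : rayleigh_lb A t0 -> \det (A - lam%:M) = 0.
Proof.
move=> lb_t0; apply/eqP/negPn/negP => det_neq0.
have lb_sup := has_sup_rayleigh_lb lb_t0.
have sB : (A - lam%:M)^T = A - lam%:M by rewrite raddfB /= tr_scalar_mx sA.
have pB : psd (A - lam%:M).
  by move=> x; rewrite qform_sub_scalar subr_ge0; exact: rayleigh_lb_sup lb_t0 x.
have [|eps eps_gt0 coer] := psd_unitmx_coercive sB pB; first by rewrite unitmxE unitfE.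
have : rayleigh_lb A (lam + eps).
  by move=> x; have := coer x; rewrite qform_sub_scalar mulrDl; lra.
by move/(sup_upper_bound lb_sup); rewrite -/lam; lra.
Qed.

Lemma least_eigen_horner_mx t0 : rayleigh_lb A t0 -> exists lam, rayleigh_lb A lam /\
  exists p : {poly R}, horner_mx A p != 0 /\ A *m horner_mx A p = lam *: horner_mx A p.
Proof.
move=> lb_t0; exists lam; split; first exact: rayleigh_lb_sup lb_t0.
exact: sym_eigen_horner_mx sA (rayleigh_sup_det lb_t0).
Qed.

End LeastEigenvalue.

Section HomogeneousGraph.
Variables (R : realType) (V : finType) (e : rel V).
Hypotheses (e_sym : symmetric e) (e_irr : irreflexive e) (e_hom : one_homogeneous e).
Variables (u0 v0 : V) (n : nat) (g : 'I_n.+1 -> V) (g' : V -> 'I_n.+1).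
Hypotheses (e_u0v0 : e u0 v0) (gK : cancel g g') (g'K : cancel g' g).

Let closed_walks_const := proj1 e_hom.
Let edge_walks_const := proj2 e_hom.

Lemma sum_enum (F : V -> R) : \sum_i F (g i) = \sum_u F u.
Proof. by rewrite [RHS](reindex g) //; exists g' => u _; [exact: gK|exact: g'K]. Qed.

Lemma nwalksS_adj k u v :
  (nwalks e k.+1 u v)%:R = \sum_w adj e u w * (nwalks e k w v)%:R :> R.
Proof.
rewrite /= natr_sum big_mkcond; apply: eq_bigr => w _ /=.
by rewrite /adj; case: (e u w); rewrite ?mul1r ?mul0r.
Qed.

Lemma nwalks2_deg u : (nwalks e 2 u u)%:R = \sum_v adj e u v :> R.
Proof.
rewrite nwalksS_adj; apply: eq_bigr => w _.
rewrite nwalksS_adj (eq_bigr (fun v => adj e w v * kdelta u v)) ?sum_mul_kdelta.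
  by rewrite /adj [e w u]e_sym; case: (e u w); rewrite ?mul1r ?mul0r.
by move=> v _; rewrite /kdelta eq_sym.
Qed.

Definition deg : R := (nwalks e 2 u0 u0)%:R.

Lemma regular_deg : regular e deg.
Proof. by move=> u; rewrite -nwalks2_deg /deg (closed_walks_const _ u u0). Qed.

Lemma deg_gt0 : 0 < deg.
Proof.
rewrite /deg nwalks2_deg (bigD1 v0) //= /adj e_u0v0.
by rewrite ltr_pwDl ?ltr01 // sumr_ge0 // => v _; exact: ler0n.
Qed.

Definition adjmx : 'M[R]_n.+1 := \matrix_(i, j) adj e (g i) (g j).

Lemma adjmx_sym : adjmx^T = adjmx.
Proof. by apply/matrixP => i j; rewrite !mxE /adj e_sym. Qed.

Lemma adjmx_expr k i j : (adjmx ^+ k) i j = (nwalks e k (g i) (g j))%:R.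
Proof.
elim: k i j => [|k IH] i j; first by rewrite expr0 mxE /= (inj_eq (can_inj gK)).
rewrite exprS -mulmxE mxE nwalksS_adj -sum_enum; apply: eq_bigr => l _.
by rewrite mxE IH.
Qed.

Lemma horner_adjmxE (p : {poly R}) i j :
  horner_mx adjmx p i j = \sum_(k < size p) p`_k * (nwalks e k (g i) (g j))%:R.
Proof.
rewrite -{1}[p]coefK poly_def rmorph_sum /= summxE; apply: eq_bigr => k _.
by rewrite linearZ /= rmorphXn /= horner_mx_X mxE adjmx_expr.
Qed.

Lemma horner_adjmx_diag (p : {poly R}) i j :
  horner_mx adjmx p i i = horner_mx adjmx p j j.
Proof.
rewrite !horner_adjmxE; apply: eq_bigr => k _.
by rewrite (closed_walks_const _ _ (g j)).
Qed.

Lemma horner_adjmx_edge (p : {poly R}) i j :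
  e (g i) (g j) -> horner_mx adjmx p i j = horner_mx adjmx p (g' u0) (g' v0).
Proof.
move=> eij; rewrite !horner_adjmxE; apply: eq_bigr => k _.
by rewrite !g'K (@edge_walks_const k _ _ _ _ eij e_u0v0).
Qed.

Lemma rayleigh_lb_adjmx t : rayleigh_lb adjmx t <-> rayleigh_lb (adj e) t.
Proof.
have qformE x : qform adjmx x = qform (adj e) (fun u => x (g' u)).
  rewrite /qform /bform -sum_enum; apply: eq_bigr => i _.
  by rewrite -sum_enum; apply: eq_bigr => j _; rewrite !gK mxE.
have norm2E (x : 'I_n.+1 -> R) : norm2 x = norm2 (fun u => x (g' u)).
  by rewrite /norm2 -sum_enum; apply: eq_bigr => i _; rewrite gK.
split=> lb x; last by rewrite qformE norm2E.
have := lb (fun i => x (g i)); rewrite qformE norm2E.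
by rewrite (funext (fun u => congr1 x (g'K u))).
Qed.

Lemma rayleigh_lb_adj_le (t : R) : rayleigh_lb (adj e) t -> t <= -1.
Proof.
have u0v0 : u0 != v0 by apply: contraTneq e_u0v0 => ->; rewrite e_irr.
move=> /(_ (fun u => kdelta u0 u + (-1) * kdelta v0 u)).
rewrite -qform_id !qform_shift !bform_kdelta !qform_kdelta /kdelta /adj.
by rewrite !eqxx !e_irr e_u0v0 e_sym e_u0v0 [v0 == u0]eq_sym (negbTE u0v0) /=; lra.
Qed.

Section EigenColoring.
Variables (lam : R) (p : {poly R}).
Let N := horner_mx adjmx p.
Hypotheses (lam_lt0 : lam < 0) (N_neq0 : N != 0) (adjmxN : adjmx *m N = lam *: N).

Let G := N *m N.
Let c := G (g' u0) (g' u0).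

Lemma gram_horner_mx : G = horner_mx adjmx (p * p).
Proof. by rewrite rmorphM. Qed.

Lemma gram_entry i j : G i j = \sum_k N i k * N j k.
Proof.
have N_sym : symm N by apply: symm_mx; exact: trmx_horner_mx adjmx_sym.
by rewrite mxE; apply: eq_bigr => k _; rewrite [N k j]N_sym.
Qed.

Lemma gram_diag i : G i i = c.
Proof. by rewrite /c gram_horner_mx; exact: horner_adjmx_diag. Qed.

Lemma gram_diag_gt0 : 0 < c.
Proof.
have c_ge0 : 0 <= c by rewrite /c gram_entry sumr_ge0 // => k _; rewrite -expr2 sqr_ge0.
rewrite lt_def c_ge0 andbT; apply: contra N_neq0 => /eqP c0.
apply/eqP/matrixP => i k; rewrite mxE.
have /eqP := gram_diag i; rewrite c0 gram_entry psumr_eq0 => [|l _]; last first.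
  by rewrite -expr2 sqr_ge0.
by move=> /allP/(_ k (mem_index_enum k)); rewrite -expr2 sqrf_eq0 => /eqP.
Qed.

(* Compare the [(u0, u0)] entries of [adjmx *m G = lam *: G]. *)
Lemma deg_gram_edge : deg * G (g' u0) (g' v0) = lam * c.
Proof.
have adjmxG : adjmx *m G = lam *: G by rewrite /G mulmxA adjmxN scalemxAl.
have := congr1 (fun X : 'M_n.+1 => X (g' u0) (g' u0)) adjmxG.
rewrite /= [in RHS]mxE gram_diag mxE => <-.
rewrite -(regular_deg u0) mulr_suml -sum_enum; apply: eq_bigr => l _.
rewrite [adjmx _ _]mxE g'K /adj; case: (boolP (e u0 (g l))) => eu0l; rewrite ?mul0r //.
by rewrite !mul1r gram_horner_mx [RHS]horner_adjmx_edge // g'K e_sym.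
Qed.

Lemma eigen_vector_coloring : vector_colorable e (1 - deg / lam).
Proof.
have c_gt0 := gram_diag_gt0.
pose s := (Num.sqrt c)^-1.
have s2 : s * s = c^-1.
  by rewrite /s -invrM -?expr2 ?sqr_sqrtr ?ltW // unitfE gt_eqF // sqrtr_gt0.
pose phi u : 'rV[R]_n.+1 := s *: row (g' u) N.
have dot_phi u v : dotv (phi u) (phi v) = c^-1 * G (g' u) (g' v).
  by rewrite dotvE gram_entry -s2 mulr_sumr; apply: eq_bigr => k _; rewrite !mxE; ring.
exists n.+1, phi; split=> [u|u v euv].
  by rewrite dot_phi gram_diag mulVf // gt_eqF.
have deg_neq0 : deg != 0 := lt0r_neq0 deg_gt0.
have lam_neq0 : lam != 0 := ltr0_neq0 lam_lt0.
rewrite dot_phi gram_horner_mx horner_adjmx_edge ?g'K // -gram_horner_mx.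
have -> : G (g' u0) (g' v0) = lam * c / deg by rewrite -deg_gram_edge; field.
rewrite le_eqVlt; apply/predU1P; left; field.
have -> : lam - deg + -1 * lam = - deg by ring.
by rewrite lam_neq0 oppr_eq0 deg_neq0 gt_eqF.
Qed.

End EigenColoring.

Lemma homogeneous_least_eigen : exists2 mu : R, 0 < mu &
  rayleigh_lb (adj e) (- mu) /\ vector_colorable e (1 + deg / mu).
Proof.
have lb_deg : rayleigh_lb adjmx (- deg).
  by apply/rayleigh_lb_adjmx => y; have := qform_adj_ge e_sym y regular_deg.
have [lam [/rayleigh_lb_adjmx lb_lam [p [N_neq0 adjmxN]]]] :=
  least_eigen_horner_mx adjmx_sym lb_deg.
have lam_lt0 : lam < 0 by have := rayleigh_lb_adj_le lb_lam; lra.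
exists (- lam); first by rewrite oppr_gt0.
split; first by move=> x; rewrite opprK; exact: lb_lam.
by rewrite invrN mulrN; exact: eigen_vector_coloring lam_lt0 N_neq0 adjmxN.
Qed.

End HomogeneousGraph.

Section CategoricalProduct.
Variables (R : realFieldType) (V W : finType) (e : rel V) (f : rel W).
Hypotheses (e_sym : symmetric e) (f_sym : symmetric f).

Lemma adj_cat_prod (x y : V * W) :
  adj (cat_prod e f) x y = kron_form (adj e) (adj f) x y :> R.
Proof. by rewrite /adj /kron_form /cat_prod -mulnb natrM. Qed.

Lemma regular_cat_prod (DG DH : R) : regular e DG -> regular f DH ->
  regular (cat_prod e f) (DG * DH).
Proof.
move=> regG regH [a b]; rewrite sum_pair -(regG a) mulr_suml.
apply: eq_bigr => a' _; rewrite -(regH b) mulr_sumr.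
by apply: eq_bigr => b' _; rewrite adj_cat_prod.
Qed.

Lemma rayleigh_lb_cat_prod (DG DH muG muH : R) :
  0 < DG -> 0 < DH -> 0 < muG -> 0 < muH -> regular e DG -> regular f DH ->
  rayleigh_lb (adj e) (- muG) -> rayleigh_lb (adj f) (- muH) ->
  rayleigh_lb (adj (cat_prod e f)) (- Num.max (DG * muH) (DH * muG)).
Proof.
move=> DG_gt0 DH_gt0 muG_gt0 muH_gt0 regG regH lbG lbH z.
set c := Num.max _ _; set k := (DG + muG) * (DH + muH).
have c_geG : DG * muH <= c by rewrite le_max lexx.
have c_geH : DH * muG <= c by rewrite le_max lexx orbT.
have k_gt0 : 0 < k by rewrite mulr_gt0 ?addr_gt0.
pose P1 a a' := adj e a a' + muG * kdelta a a'.
pose P2 a a' := DG * kdelta a a' - adj e a a'.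
pose Q1 b b' := adj f b b' + muH * kdelta b b'.
pose Q2 b b' := DH * kdelta b b' - adj f b b'.
pose K x y :=
  (DG * DH + c) / k * kron_form P1 Q1 x y +
  ((c - DG * muH) / k * kron_form P1 Q2 x y +
  ((c - muG * DH) / k * kron_form P2 Q1 x y +
  (muG * muH + c) / k * kron_form P2 Q2 x y)).
have psdK : psd K.
  have sP1 : symm P1 by move=> a a'; rewrite /P1 symm_adj // symm_kdelta.
  have sP2 : symm P2 by move=> a a'; rewrite /P2 symm_adj // symm_kdelta.
  have [pP1 pP2] := (psd_adj_shift lbG, psd_deg_sub_adj e_sym regG).
  have [pQ1 pQ2] := (psd_adj_shift lbH, psd_deg_sub_adj f_sym regH).
  have coef_ge0 a : 0 <= a -> 0 <= a / k by move=> a_ge0; exact: divr_ge0 (ltW _).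
  by repeat apply: psdD; (apply: psdZ; [apply: coef_ge0; nra | exact: psd_kron]).
rewrite -subr_ge0 mulNr opprK -qform_id -qformZ -qformD.
rewrite (@eq_qform _ _ _ K z) ?psdK // => -[a b] [a' b'].
rewrite adj_cat_prod /K /kron_form /P1 /P2 /Q1 /Q2 -kron_kdelta /kron_form /=.
by rewrite /k; field; rewrite !gt_eqF ?addr_gt0.
Qed.

End CategoricalProduct.

Lemma homogeneous_spectrum (R : realType) (V : finType) (e : rel V) :
  simple_graph e -> one_homogeneous e -> has_edge e ->
  exists D mu : R, [/\ 0 < D, 0 < mu, regular e D,
    rayleigh_lb (adj e) (- mu) & vector_colorable e (1 + D / mu)].
Proof.
move=> [e_sym e_irr] e_hom [u0 [v0 e_u0v0]].
have cardV : #|V| = #|V|.-1.+1 by rewrite prednK //; apply/card_gt0P; exists u0.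
pose g i := enum_val (cast_ord (esym cardV) i).
pose g' u := cast_ord cardV (enum_rank u).
have gK : cancel g g' by move=> i; rewrite /g /g' enum_valK cast_ordKV.
have g'K : cancel g' g by move=> u; rewrite /g /g' cast_ordK enum_rankK.
have [mu mu_gt0 [lb col]] :=
  homogeneous_least_eigen R e_sym e_irr e_hom e_u0v0 gK g'K.
by exists (deg R e u0), mu; split=> //; [exact: deg_gt0 e_u0v0 | exact: regular_deg].
Qed.

Lemma chi_vec_edgeless (R : realType) (V : finType) (e : rel V) :
  ~ has_edge e -> chi_vec R e = 1.
Proof. by move=> eN; rewrite /chi_vec asboolF. Qed.

Lemma chi_vec_min (R : realType) (V : finType) (e : rel V) (kappa : R) :
  has_edge e -> 1 < kappa -> vector_colorable e kappa ->
  (forall k, 1 < k -> vector_colorable e k -> kappa <= k) -> chi_vec R e = kappa.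
Proof.
move=> eE kappa_gt1 col_kappa kappa_min; rewrite /chi_vec asboolT //.
set S := [set k : R | 1 < k /\ vector_colorable e k]%classic.
have lb_kappa : lbound S kappa by move=> k []; exact: kappa_min.
apply/eqP; rewrite eq_le; apply/andP; split.
  by apply: ge_inf; [exists kappa | split].
by apply: lb_le_inf; first exists kappa.
Qed.

Lemma chi_vec_rayleigh (R : realType) (V : finType) (e : rel V) (D mu : R) :
  has_edge e -> 0 < D -> 0 < mu -> regular e D -> rayleigh_lb (adj e) (- mu) ->
  vector_colorable e (1 + D / mu) -> chi_vec R e = 1 + D / mu.
Proof.
move=> eE D_gt0 mu_gt0 regD lb col.
have kappa_gt1 : 1 < 1 + D / mu by rewrite ltrDl divr_gt0.
apply: chi_vec_min => // k k_gt1; apply: vector_colorable_ge => //.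
by have [u0 _] := eE; apply/card_gt0P; exists u0.
Qed.

Lemma chi_vec_ge1 (R : realType) (V : finType) (e : rel V) :
  simple_graph e -> one_homogeneous e -> 1 <= chi_vec R e.
Proof.
move=> sG hG; have [eE|eN] := pselect (has_edge e); last by rewrite chi_vec_edgeless.
have [D [mu [D_gt0 mu_gt0 regD lb col]]] := homogeneous_spectrum R sG hG eE.
by rewrite (chi_vec_rayleigh eE D_gt0 mu_gt0 regD lb col) // lerDl divr_ge0 ?ltW.
Qed.

Lemma has_edge_cat_prod (V W : finType) (e : rel V) (f : rel W) :
  has_edge (cat_prod e f) <-> has_edge e /\ has_edge f.
Proof.
split=> [[[a b] [[a' b'] /andP[eaa' fbb']]]|[[a [a' eaa']] [b [b' fbb']]]].
  by split; [exists a, a' | exists b, b'].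
by exists (a, b), (a', b'); apply/andP.
Qed.

Lemma vector_colorable_cat_prodl (R : realType) (V W : finType)
    (e : rel V) (f : rel W) (k : R) :
  vector_colorable e k -> vector_colorable (cat_prod e f) k.
Proof.
move=> [d [phi [phi_unit phi_edge]]]; exists d, (fun x => phi x.1); split=> //.
by move=> x y /andP[exy _]; exact: phi_edge.
Qed.

Lemma vector_colorable_cat_prodr (R : realType) (V W : finType)
    (e : rel V) (f : rel W) (k : R) :
  vector_colorable f k -> vector_colorable (cat_prod e f) k.
Proof.
move=> [d [phi [phi_unit phi_edge]]]; exists d, (fun x => phi x.2); split=> //.
by move=> x y /andP[_ fxy]; exact: phi_edge.
Qed.

Lemma ratio_max_min (R : realFieldType) (DG DH muG muH : R) :
  0 < DG -> 0 < DH -> 0 < muG -> 0 < muH ->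
  1 + DG * DH / Num.max (DG * muH) (DH * muG) =
  Num.min (1 + DG / muG) (1 + DH / muH).
Proof.
move=> DG_gt0 DH_gt0 muG_gt0 muH_gt0.
have ratio_subE (a b c d : R) :
    0 < b -> 0 < d -> a / b - c / d = (a * d - c * b) / (b * d).
  by move=> b_gt0 d_gt0; field; rewrite !gt_eqF.
have [le_GH|lt_HG] := leP (DG * muH) (DH * muG).
  rewrite min_l; first by congr (1 + _); field; rewrite !gt_eqF.
  by rewrite lerD2l -subr_ge0 ratio_subE // divr_ge0 ?mulr_ge0 ?subr_ge0 // ltW.
rewrite min_r; first by congr (1 + _); field; rewrite !gt_eqF.
by rewrite lerD2l -subr_ge0 ratio_subE // divr_ge0 ?mulr_ge0 ?subr_ge0 // ltW.
Qed.

Theorem theorem5p5 (R : realType) (V W : finType) (e : rel V) (f : rel W) :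
  simple_graph e -> simple_graph f ->
  one_homogeneous e -> one_homogeneous f ->
  chi_vec R (cat_prod e f) = Num.min (chi_vec R e) (chi_vec R f).
Proof.
move=> sG sH hG hH.
have [eE|eN] := pselect (has_edge e); last first.
  have eGH : ~ has_edge (cat_prod e f) by case/has_edge_cat_prod.
  by rewrite (chi_vec_edgeless R eGH) (chi_vec_edgeless R eN) min_l ?chi_vec_ge1.
have [fE|fN] := pselect (has_edge f); last first.
  have eGH : ~ has_edge (cat_prod e f) by case/has_edge_cat_prod.
  by rewrite (chi_vec_edgeless R eGH) (chi_vec_edgeless R fN) min_r ?chi_vec_ge1.
have [DG [muG [DG_gt0 muG_gt0 regG lbG colG]]] := homogeneous_spectrum R sG hG eE.
have [DH [muH [DH_gt0 muH_gt0 regH lbH colH]]] := homogeneous_spectrum R sH hH fE.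
rewrite (chi_vec_rayleigh eE DG_gt0 muG_gt0 regG lbG colG).
rewrite (chi_vec_rayleigh fE DH_gt0 muH_gt0 regH lbH colH) -ratio_max_min //.
have [[e_sym _] [f_sym _]] := (sG, sH).
apply: chi_vec_rayleigh.
- exact/has_edge_cat_prod.
- exact: mulr_gt0.
- by rewrite lt_max mulr_gt0.
- exact: regular_cat_prod.
- exact: rayleigh_lb_cat_prod.
rewrite ratio_max_min //; case: leP => _.
  exact: vector_colorable_cat_prodl.
exact: vector_colorable_cat_prodr.
Qed.
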